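(* Let $W_1,\dots,W_m\in\mathbb{R}^{n\times n}$ be eventually doubly stochastic signed adjacency matrices, let $Q\in\mathbb{R}^{(n-1)\times n}$ satisfy $QQ^\top=I_{n-1}$, $Q\mathbf{1}=0$, fix an integer $r\ge1$, and set $\hat W_k=W_k\otimes\cdots\otimes W_k$ and $\hat Q=Q\otimes\cdots\otimes Q$ ($r$-fold Kronecker products). If there exists a symmetric positive definite $\hat P\in\mathbb{R}^{n^r\times n^r}$ such that \[ \hat Q\hat W_k^\top\hat P\hat W_k\hat Q^\top-\hat Q\hat P\hat Q^\top\prec0\quad\text{for all }k=1,\dots,m, \] then $\{W_1,\dots,W_m\}$ is a consensus set for the switched system $\mathbf{x}(t+1)=W_{\sigma(t)}\mathbf{x}(t)$.
   Context: $W_k$ are real matrices (entries of any sign). $W$ is eventually positive if there is $t_0\in\mathbb{Z}_{\ge0}$ with $W^t$ entrywise positive for all integers $t\ge t_0$; eventually doubly stochastic means eventually positive with $W\mathbf{1}=W^\top\mathbf{1}=\mathbf{1}$. $X\prec0$ means symmetric negative definite. A switching signal is any map $\sigma:\mathbb{Z}_{\ge0}\to\{1,\dots,m\}$; a consensus set is one for which, for every switching signal and every $\mathbf{x}(0)$, $\mathbf{x}(t)\to\alpha\mathbf{1}$ for some $\alpha\in\mathbb{R}$. *)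

From HB Require Import structures.
From mathcomp Require Import all_boot all_order all_algebra.
From mathcomp Require Import all_classical all_reals all_analysis.
From mathcomp.real_closed Require Export mxtens.
Set Implicit Arguments. Unset Strict Implicit. Unset Printing Implicit Defensive.
Import Order.TTheory GRing.Theory Num.Theory numFieldNormedType.Exports.
Local Open Scope ring_scope. Local Open Scope classical_set_scope.

Definition ones (R : realType) (n : nat) : 'cV[R]_n := const_mx 1.

Definition eventually_positive (R : realType) (n : nat) (W : 'M[R]_n) : Prop :=
  exists t0 : nat, forall t : nat, (t0 <= t)%N -> forall i j, 0 < (W ^+ t) i j.

Definition eventually_doubly_stochastic (R : realType) (n : nat) (W : 'M[R]_n) : Prop :=
  eventually_positive W /\ W *m ones R n = ones R n /\ W^T *m ones R n = ones R n.

Definition pos_def (R : realType) (n : nat) (X : 'M[R]_n) : Prop :=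
  X^T = X /\ forall v : 'cV[R]_n, v != 0 -> 0 < (v^T *m X *m v) 0 0.

Definition neg_def (R : realType) (n : nat) (X : 'M[R]_n) : Prop :=
  X^T = X /\ forall v : 'cV[R]_n, v != 0 -> (v^T *m X *m v) 0 0 < 0.

Fixpoint traj (R : realType) (n m : nat) (W : 'I_m -> 'M[R]_n)
  (sigma : nat -> 'I_m) (x0 : 'cV[R]_n) (t : nat) : 'cV[R]_n :=
  match t with
  | O => x0
  | S t' => W (sigma t') *m traj W sigma x0 t'
  end.

Definition consensus_set (R : realType) (n m : nat) (W : 'I_m -> 'M[R]_n) : Prop :=
  forall (sigma : nat -> 'I_m) (x0 : 'cV[R]_n),
    exists alpha : R, forall i : 'I_n,
      (fun t : nat => traj W sigma x0 t i 0) @ \oo --> alpha.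

From HB Require Import structures.
From mathcomp Require Import all_boot all_order all_algebra.
From mathcomp Require Import all_classical all_reals all_analysis.
From mathcomp.real_closed Require Import mxtens.
From mathcomp.algebra_tactics Require Import lra.
Set Implicit Arguments. Unset Strict Implicit. Unset Printing Implicit Defensive.
Import Order.TTheory GRing.Theory Num.Theory numFieldNormedType.Exports.
Local Open Scope ring_scope.
Local Open Scope classical_set_scope.

(* Since every W_k fixes 1 and 1^T, the deviation u(t) of x(t) from the
   average of x(0) obeys the same recursion and stays orthogonal to 1, so
   Q^T Q u(t) = u(t).  With y(t) = u(t)^{(x)r} and V(t) = y(t)^T P y(t), the
   vector z = Q^{(x)r} y(t) satisfies
     z^T (Q W^T P W Q^T) z = V(t+1)   and   z^T (Q P Q^T) z = V(t),
   where W, Q stand for their r-fold tensor powers.  Negative definiteness of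
   the difference of these two forms, uniformly over the finitely many k,
   gives V(t+1) <= (1 - c) V(t).  Positive definiteness of P gives
   V(t) >= c' |u(t)|^{2r}, hence u(t) -> 0 geometrically. *)

Section TensorPower.
Variable R : comPzRingType.

Lemma ntensmx_mul m n p k (A : 'M[R]_(m, n)) (B : 'M[R]_(n, p)) :
  A ^t k *m B ^t k = (A *m B) ^t k.
Proof.
case: k => [|k]; first by rewrite !ntensmx0 mul1mx.
by rewrite /ntensmx; elim: k => [|k IH] //=; rewrite tensmx_mul IH.
Qed.

Lemma trmx_ntens m n k (A : 'M[R]_(m, n)) : (A ^t k)^T = A^T ^t k.
Proof.
case: k => [|k]; first by rewrite !ntensmx0 trmx1.
by rewrite /ntensmx; elim: k => [|k IH] //=; rewrite trmx_tens IH.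
Qed.

Lemma ord_exp1_eq k (i j : 'I_(1 ^ k)) : i = j.
Proof.
apply/val_inj; case: i j => [a Ha] [b Hb] /=.
by move: Ha Hb; rewrite exp1n !ltnS !leqn0 => /eqP -> /eqP ->.
Qed.

Lemma ntensmx11 k (A : 'M[R]_1) i j : (A ^t k) i j = A 0 0 ^+ k.
Proof.
case: k i j => [|k] i j.
  by rewrite ntensmx0 !mxE expr0 (ord_exp1_eq i j) eqxx.
rewrite /ntensmx; elim: k i j => [|k IH] i j /=.
  by rewrite expr1; congr (A _ _); apply: (@ord_exp1_eq 1).
case: (mxtens_indexP i) => i0 i1; case: (mxtens_indexP j) => j0 j1.
by rewrite tensmxE IH [i0]ord1 [j0]ord1 (exprS _ k.+1).
Qed.

(* [v ^t k] has [1 ^ k] columns, which is 1 only propositionally. *)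
Definition ntens_col n (v : 'cV[R]_n) k : 'cV[R]_(n ^ k) :=
  col (cast_ord (esym (exp1n k)) ord0) (v ^t k).

Lemma ntens_colM m n k (A : 'M[R]_(m, n)) (v : 'cV[R]_n) :
  ntens_col (A *m v) k = A ^t k *m ntens_col v k.
Proof. by rewrite /ntens_col -ntensmx_mul !colE mulmxA. Qed.

End TensorPower.

Section QuadraticForm.
Variable R : realType.

Definition qform d (M : 'M[R]_d) (v : 'cV[R]_d) : R := (v^T *m M *m v) 0 0.

Lemma qformZ d (M : 'M[R]_d) a v : qform M (a *: v) = a ^+ 2 * qform M v.
Proof.
by rewrite /qform [(a *: v)^T]linearZ /= -!scalemxAl -scalemxAr scalerA mxE expr2.
Qed.

Lemma qformB d (M N : 'M[R]_d) v : qform (M - N) v = qform M v - qform N v.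
Proof. by rewrite /qform mulmxBr mulmxBl !mxE. Qed.

Lemma qformN d (M : 'M[R]_d) v : qform (- M) v = - qform M v.
Proof. by rewrite /qform mulmxN mulNmx !mxE. Qed.

Lemma qform_mulmx p d (A : 'M[R]_(p, d)) (M : 'M[R]_p) v :
  qform (A^T *m M *m A) v = qform M (A *m v).
Proof. by rewrite /qform trmx_mul !mulmxA. Qed.

Lemma qform_conj_proj p d (A : 'M[R]_(p, d)) (M : 'M[R]_d) v :
  A^T *m A *m v = v -> qform (A *m M *m A^T) (A *m v) = qform M v.
Proof.
by move=> Av; rewrite -{1}(trmxK A) qform_mulmx mulmxA Av.
Qed.

Lemma qform_col a b (A : 'M[R]_(a, b)) (M : 'M[R]_a) j :
  qform M (col j A) = (A^T *m M *m A) j j.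
Proof.
rewrite /qform !mxE; apply: eq_bigr => l _; rewrite !mxE; congr (_ * _).
by apply: eq_bigr => k _; rewrite !mxE.
Qed.

Lemma qform1_ntens_col n (v : 'cV[R]_n) k :
  qform 1%:M (ntens_col v k) = qform 1%:M v ^+ k.
Proof.
by rewrite qform_col mulmx1 trmx_ntens ntensmx_mul ntensmx11 /qform mulmx1.
Qed.

Lemma sqr_le_qform1 n (v : 'cV[R]_n) i : v i 0 ^+ 2 <= qform 1%:M v.
Proof.
rewrite /qform mulmx1 mxE (bigD1 i) //= mxE -expr2 lerDl sumr_ge0 // => l _.
by rewrite mxE -expr2 sqr_ge0.
Qed.

Lemma pos_def_qform_ge0 d (P : 'M[R]_d) v : pos_def P -> 0 <= qform P v.
Proof.
case=> _ HP; have [->|v0] := eqVneq v 0; last exact/ltW/HP.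
by rewrite /qform trmx0 !mul0mx mxE.
Qed.

Lemma continuous_qform d (M : 'M[R]_d) :
  continuous (fun w : 'rV[R]_d => qform M w^T).
Proof.
have -> : (fun w : 'rV[R]_d => qform M w^T) =
    (fun w => \sum_(j <- index_enum 'I_d)
               ((\sum_(i <- index_enum 'I_d) w 0 i * M i j) * w 0 j)).
  apply: funext => w; rewrite /qform trmxK !mxE; apply: eq_bigr => j _.
  by rewrite !mxE; congr (_ * _); apply: eq_bigr => i _; rewrite !mxE.
apply: continuous_big; first exact: add_continuous.
move=> j _ w; apply: continuousM; last exact: coord_continuous.
apply: continuous_big; first exact: add_continuous.
move=> i _ w'; apply: continuousM; first exact: coord_continuous.
exact: cst_continuous.
Qed.

Lemma compact_unit_sphere d : compact [set w : 'rV[R]_d | `|w| = 1].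
Proof.
apply: bounded_closed_compact.
  by exists 1; split => // M M1 w /= ->; exact: ltW.
apply: (@preimage_closed _ _ (fun w : 'rV[R]_d => `|w|) [set 1]).
  by move=> w _; exact: norm_continuous.
exact: closed_eq.
Qed.

Lemma unit_sphere_scale d (w : 'rV[R]_d) : w != 0 ->
  exists2 u, `|u| = 1 & w = `|w| *: u.
Proof.
rewrite -normr_gt0 => w0; exists (`|w|^-1 *: w).
  by rewrite mx_normZ ger0_norm ?invr_ge0 ?ltW // mulVf ?gt_eqF.
by rewrite scalerA divff ?gt_eqF // scale1r.
Qed.

(* Compare both forms on the unit sphere, where [- qform Y] attains a positive
   minimum and [qform X] a maximum; homogeneity extends this to all vectors. *)
Lemma neg_def_dominates d (X Y : 'M[R]_d) : neg_def Y ->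
  exists2 c, 0 < c & forall v, c * qform X v <= - qform Y v.
Proof.
case=> _; case: d X Y => [|d] X Y HY.
  by exists 1 => // v; rewrite (flatmx0 v) /qform trmx0 !mul0mx mxE mulr0 oppr0.
pose S := [set w : 'rV[R]_d.+1 | `|w| = 1].
have e0 : (const_mx 1 : 'rV[R]_d.+1) != 0.
  by apply/eqP => /matrixP /(_ 0 0); rewrite !mxE => /eqP; rewrite oner_eq0.
have S0 : S !=set0 by have [u u1 _] := unit_sphere_scale e0; exists u.
have cS := @compact_unit_sphere d.+1.
have [a /[!inE] aS amin] := @EVT_min_rV R _ (fun w => - qform Y w^T) S S0 cS
  (continuous_subspaceT (fun w => continuousN (@continuous_qform _ Y w))).
have [b _ bmax] := @EVT_max_rV R _ (fun w => qform X w^T) S S0 cS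
  (continuous_subspaceT (@continuous_qform _ X)).
have Ya : 0 < - qform Y a^T.
  rewrite oppr_gt0 HY // trmx_eq0; apply/eqP => a0.
  by move: aS; rewrite /S /= a0 normr0 => /esym/eqP; rewrite oner_eq0.
pose M := Num.max (qform X b^T) 1.
have M0 : 0 < M by rewrite lt_max ltr01 orbT.
exists (- qform Y a^T / M); first exact: divr_gt0.
move=> v; have [->|] := eqVneq v 0.
  by rewrite /qform trmx0 !mul0mx !mxE mulr0 oppr0.
rewrite -[v]trmxK trmx_eq0 => /unit_sphere_scale[u u1 ->].
rewrite linearZ /= !qformZ mulrCA -mulrN ler_wpM2l ?sqr_ge0 //.
have uS : u \in S by rewrite inE.
apply: le_trans (amin _ uS); rewrite -mulrA ler_piMr ?(ltW Ya) //.
by rewrite mulrC ler_pdivrMr // mul1r le_max bmax.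
Qed.

Lemma pos_def_qform_lbound d (P : 'M[R]_d) : pos_def P ->
  exists2 c, 0 < c & forall v, c * qform 1%:M v <= qform P v.
Proof.
case=> PT HP; have [|c c0 Hc] := @neg_def_dominates _ 1%:M (- P).
  split; first by rewrite raddfN /= PT.
  by move=> v v0; rewrite -/(qform _ _) qformN oppr_lt0 HP.
by exists c => // v; rewrite -[qform P v]opprK -qformN.
Qed.

End QuadraticForm.

Lemma ones_tr_ones (R : realType) n : (ones R n)^T *m ones R n = n%:R%:M.
Proof.
apply/matrixP => i j; rewrite [i]ord1 [j]ord1 !mxE.
by under eq_bigr do rewrite !mxE mulr1; rewrite sumr_const card_ord.
Qed.

(* [Q] has orthonormal rows spanning the complement of [1]: the square matrices
   [A = (1^T / (n+1); Q)] and [B = (1, Q^T)] satisfy [A B = 1], hence [B A = 1],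
   which reads [1 1^T / (n+1) + Q^T Q = 1]. *)
Lemma orth_complement_projK (R : realType) n (Q : 'M[R]_(n, n.+1)) (v : 'cV[R]_n.+1) :
  Q *m Q^T = 1%:M -> Q *m ones R n.+1 = 0 -> (ones R n.+1)^T *m v = 0 ->
  Q^T *m Q *m v = v.
Proof.
move=> QQ Q1 v1.
pose A : 'M[R]_(1 + n, n.+1) := col_mx ((n.+1)%:R^-1 *: (ones R n.+1)^T) Q.
pose B : 'M[R]_(n.+1, 1 + n) := row_mx (ones R n.+1) Q^T.
have AB : A *m B = 1%:M.
  rewrite mul_col_mx !mul_mx_row -block_mxEv QQ Q1 -!scalemxAl ones_tr_ones.
  rewrite -trmx_mul Q1 trmx0 scaler0 scale_scalar_mx mulVf ?pnatr_eq0 //.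
  by rewrite -scalar_mx_block.
rewrite -{2}[v]mul1mx -(mulmx1C AB) -[B *m A *m v]mulmxA mul_col_mx.
by rewrite -scalemxAl v1 scaler0 mul_row_col mulmx0 add0r mulmxA.
Qed.

Lemma geometric_decay (R : realDomainType) (V : nat -> R) rho :
  0 <= rho -> (forall t, V t.+1 <= rho * V t) -> forall t, V t <= rho ^+ t * V 0.
Proof.
move=> rho0 HV; elim=> [|t IH]; first by rewrite expr0 mul1r.
by rewrite (le_trans (HV t)) // exprS -mulrA ler_wpM2l.
Qed.

Lemma cvg0_pow_geometric (R : realType) (a : nat -> R) k C rho :
  (0 < k)%N -> 0 <= rho < 1 -> (forall t, `|a t| ^+ k <= C * rho ^+ t) ->
  a @ \oo --> 0.
Proof.
move=> k0 /andP[rho0 rho1] Ha; apply/cvgrPdist_lt => e e0.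
have : (fun t => C * rho ^+ t) @ \oo --> 0.
  rewrite -(mulr0 C); apply: cvgM; first exact: cvg_cst.
  by apply: cvg_expr; rewrite ger0_norm.
move=> /cvgrPdist_lt /(_ (e ^+ k) (exprn_gt0 _ e0)); apply: filterS => t.
rewrite !sub0r !normrN => Ct.
rewrite -(ltr_pXn2r k0) ?nnegrE ?normr_ge0 ?(ltW e0) //.
exact: le_lt_trans (Ha t) (le_lt_trans (ler_norm _) Ct).
Qed.

Section SwitchedConsensus.
Variables (R : realType) (n m r : nat) (W : 'I_m -> 'M[R]_n.+1).
Hypothesis W_ones : forall k, W k *m ones R n.+1 = ones R n.+1.
Hypothesis trW_ones : forall k, (W k)^T *m ones R n.+1 = ones R n.+1.
Variables (sigma : nat -> 'I_m) (x0 : 'cV[R]_n.+1).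

Definition mean_init : R := ((ones R n.+1)^T *m x0) 0 0 / (n.+1)%:R.

Definition deviation t := traj W sigma x0 t - mean_init *: ones R n.+1.

Lemma deviationS t : deviation t.+1 = W (sigma t) *m deviation t.
Proof. by rewrite /deviation /= mulmxBr -scalemxAr W_ones. Qed.

Lemma ones_deviation t : (ones R n.+1)^T *m deviation t = 0.
Proof.
elim: t => [|t IH].
  rewrite mulmxBr -scalemxAr ones_tr_ones scale_scalar_mx /mean_init divfK ?pnatr_eq0 //.
  by rewrite -mx11_scalar subrr.
by rewrite deviationS mulmxA -[_ *m W _]trmxK trmx_mul trmxK trW_ones.
Qed.

Lemma deviationE t i : deviation t i 0 = traj W sigma x0 t i 0 - mean_init.
Proof. by rewrite !mxE mulr1. Qed.

Variables (Q : 'M[R]_(n, n.+1)) (P : 'M[R]_(n.+1 ^ r)).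
Hypotheses (QQ : Q *m Q^T = 1%:M) (Q_ones : Q *m ones R n.+1 = 0).
Hypothesis P_pos : pos_def P.
Hypothesis LMI : forall k, neg_def
  (Q ^t r *m (W k ^t r)^T *m P *m W k ^t r *m (Q ^t r)^T - Q ^t r *m P *m (Q ^t r)^T).

Definition lyapunov t := qform P (ntens_col (deviation t) r).

Lemma lyapunov_proj t :
  (Q ^t r)^T *m Q ^t r *m ntens_col (deviation t) r = ntens_col (deviation t) r.
Proof.
by rewrite trmx_ntens ntensmx_mul -ntens_colM orth_complement_projK ?ones_deviation.
Qed.

Lemma lyapunov_contraction :
  exists2 rho, 0 <= rho < 1 & forall t, lyapunov t.+1 <= rho * lyapunov t.
Proof.
pose X := Q ^t r *m P *m (Q ^t r)^T.
have [c Hc] := choice (fun k => (exists2P _ _).1 (neg_def_dominates X (LMI k))).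
pose c0 := \big[Num.min/1]_k c k.
have c0_gt0 : 0 < c0 by apply: lt_bigmin => // k _; case: (Hc k).
have c0_le1 : c0 <= 1 by apply: bigmin_le_id.
exists (1 - c0) => [|t]; first by apply/andP; split; lra.
pose z := Q ^t r *m ntens_col (deviation t) r.
have Xz : qform X z = lyapunov t by rewrite qform_conj_proj // lyapunov_proj.
have Bz : qform (Q ^t r *m (W (sigma t) ^t r)^T *m P *m W (sigma t) ^t r
                 *m (Q ^t r)^T) z = lyapunov t.+1.
  rewrite -[_ *m P]mulmxA -[_ *m W _ ^t r]mulmxA qform_conj_proj ?lyapunov_proj //.
  by rewrite qform_mulmx -ntens_colM -deviationS.
have [_ /(_ z)] := Hc (sigma t); rewrite qformB Bz Xz => dec.
have : c0 * lyapunov t <= c (sigma t) * lyapunov t.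
  by rewrite ler_wpM2r ?pos_def_qform_ge0 ?bigmin_le.
lra.
Qed.

Lemma deviation_cvg0 (r_gt0 : (0 < r)%N) i : (fun t => deviation t i 0) @ \oo --> 0.
Proof.
have [rho rho01 Hrho] := lyapunov_contraction.
have [c c0 Hc] := pos_def_qform_lbound P_pos.
apply: (@cvg0_pow_geometric _ _ (2 * r) (lyapunov 0 / c) rho) => // [|t].
  by rewrite muln_gt0.
have rho0 : 0 <= rho by case/andP: rho01.
rewrite mulrAC ler_pdivlMr // mulrC exprM real_normK ?num_real // [leRHS]mulrC.
apply: le_trans (geometric_decay rho0 Hrho t).
apply: le_trans (Hc (ntens_col (deviation t) r)).
rewrite ler_pM2l // qform1_ntens_col.
apply: lerXn2r; rewrite ?nnegrE ?sqr_ge0 ?sqr_le_qform1 //.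
exact: le_trans (sqr_ge0 _) (sqr_le_qform1 _ i).
Qed.

Lemma traj_cvg_mean (r_gt0 : (0 < r)%N) i :
  (fun t => traj W sigma x0 t i 0) @ \oo --> mean_init.
Proof.
by apply/subr_cvg0; under eq_fun do rewrite -deviationE; exact: deviation_cvg0.
Qed.

End SwitchedConsensus.

Theorem corollary7 (R : realType) (n m r : nat) (W : 'I_m -> 'M[R]_n)
  (Q : 'M[R]_(n.-1, n)) (P : 'M[R]_(n ^ r)) :
  (forall k, eventually_doubly_stochastic (W k)) ->
  Q *m Q^T = 1%:M ->
  Q *m ones R n = 0 ->
  (0 < r)%N ->
  pos_def P ->
  (forall k : 'I_m,
     neg_def ((Q ^t r) *m (W k ^t r)^T *m P *m (W k ^t r) *m (Q ^t r)^T
              - (Q ^t r) *m P *m (Q ^t r)^T)) ->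
  consensus_set W.
Proof.
case: n W Q P => [|n] W Q P HW QQ Q_ones r_gt0 P_pos LMI sigma x0.
  by exists 0 => -[].
have W_ones k : W k *m ones R n.+1 = ones R n.+1 by case: (HW k) => _ [].
have trW_ones k : (W k)^T *m ones R n.+1 = ones R n.+1 by case: (HW k) => _ [].
exists (mean_init x0) => i.
exact (traj_cvg_mean W_ones trW_ones sigma QQ Q_ones P_pos LMI r_gt0 i).
Qed.
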